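(* Fix $N\ge1$ and let $\mathbf{F}$ be either $\mathbf{F}^{\rm Midpt}$ or $\mathbf{F}^{\rm Mass}$ (defined in the context). Given an initial condition $\mathbf{b}_0\in\mathbb{C}^N$, there exists $\Delta t_1>0$ such that for any fixed $\Delta t\le\Delta t_1$ the scheme $\mathbf{b}_{n+1}=\mathbf{b}_n+\Delta t\,\mathbf{F}(\mathbf{b}_n,\mathbf{b}_{n+1})$ can always be solved: for every $n\ge0$, the iterate $\mathbf{b}_{n+1}$ exists.
   Context: For $\mathbf{b}_n,\mathbf{b}_{n+1}\in\mathbb{C}^N$ with components $b_{j,n},b_{j,n+1}$, set $b_{0,m}=b_{N+1,m}=0$ for $m\in\{n,n+1\}$, and define $b_{j,n+1/2}=\tfrac12(b_{j,n}+b_{j,n+1})$, $|b|^2_{j,n+1/2}=\tfrac12(|b_{j,n}|^2+|b_{j,n+1}|^2)$. For $j=1,\dots,N$: $F^{\rm Midpt}_j=-i|b_{j,n+1/2}|^2b_{j,n+1/2}+2i\,\overline{b_{j,n+1/2}}(b_{j-1,n+1/2}^2+b_{j+1,n+1/2}^2)$ (implicit midpoint); $F^{\rm Mass}_j=-i|b|^2_{j,n+1/2}b_{j,n+1/2}+2i\,\overline{b_{j,n+1/2}}(b_{j+1,n+1/2}^2+b_{j-1,n+1/2}^2)$ (modified midpoint). Both are discretizations of the toy model system $-i\dot b_j=-|b_j|^2b_j+2b_{j-1}^2\bar b_j+2b_{j+1}^2\bar b_j$, $b_0=b_{N+1}=0$, and both exactly conserve the mass $\sum_j|b_{j,n}|^2$;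 they are the ''mass preserving schemes''. *)

From HB Require Import structures.
From mathcomp Require Import all_boot all_order all_algebra.
From mathcomp Require Import complex.
From mathcomp Require Import reals.
Set Implicit Arguments. Unset Strict Implicit. Unset Printing Implicit Defensive.
Import Order.TTheory GRing.Theory Num.Theory.
Local Open Scope ring_scope.

Inductive scheme := Midpt | Mass.

Section Defs.
Variable R : realType.
Notation C := (R[i]).

(* a vector of C^N, components indexed 1..N via 'I_N (index j-1) *)
Definition cvec (N : nat) := 'I_N -> C.

(* component j (1-based) with boundary convention b_0 = b_{N+1} = 0 *)
Definition comp (N : nat) (b : cvec N) (j : nat) : C :=
  if (0 < j)%N then
    (if @insub nat (fun k => (k < N)%N) 'I_N j.-1 is Some i then b i else 0)
  else 0.

Definition Fj (s : scheme) (N : nat) (bn bn1 : cvec N) (j : nat) : C :=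
  let h k := (comp bn k + comp bn1 k) / 2 in
  let sq := match s with
            | Midpt => `|h j| ^+ 2
            | Mass => (`|comp bn j| ^+ 2 + `|comp bn1 j| ^+ 2) / 2
            end in
  - 'i%C * sq * h j + 2 * 'i%C * ((h j)^*)%C * (h j.-1 ^+ 2 + h j.+1 ^+ 2).

Definition F (s : scheme) (N : nat) (bn bn1 : cvec N) : cvec N :=
  fun j => Fj s bn bn1 (j.+1).

Definition step (s : scheme) (N : nat) (dt : R) (bn bn1 : cvec N) : Prop :=
  forall j : 'I_N, bn1 j = bn j + (dt%:C)%C * F s bn bn1 j.

End Defs.

From Pilot Require Import Defs.
From HB Require Import structures.
From mathcomp Require Import all_boot all_order all_algebra.
From mathcomp Require Import complex classical_sets reals.
From mathcomp Require Import ring lra.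
Import Order.TTheory GRing.Theory Num.Theory Normc Defs.

(* Both schemes conserve the discrete mass: pairing the step with the
   midpoint b_{n+1/2} turns the increment of |b_j|^2 into dt times a
   difference of bond currents, which telescopes thanks to b_0 = b_{N+1} = 0.
   Hence every iterate lies in the ball of radius r = 1 + mass(b_0).  On such
   a ball F is cubic, so for dt * 120 r^2 <= 1 the map x |-> b_n + dt F(b_n, x)
   sends the ball of radius 2r into itself and halves distances; its Picard
   iterates converge (componentwise, by completeness of R) to b_{n+1}.  The
   bound on dt depends on b_0 only, not on n. *)

Set Implicit Arguments.
Unset Strict Implicit.
Unset Printing Implicit Defensive.

Local Open Scope ring_scope.
Local Open Scope complex_scope.
(* With ring_scope open as well, a bare [x^*] or ['i] inside a product parses
   as [Num.conj] / [Num.imaginary]; hence the explicit [%C] below. *)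

Section MassPreservingSchemes.
Variable R : realType.
Local Notation C := R[i].

Lemma normr_normc (z : C) : `|z| = (normc z : R)%:C.
Proof. by case: z => a b; rewrite normc_def. Qed.

Lemma normc_ge0 (z : C) : 0 <= normc z.
Proof. by case: z => a b; exact: sqrtr_ge0. Qed.

Lemma normc_conj (z : C) : normc z^*%C = normc z.
Proof. by case: z => a b /=; rewrite sqrrN. Qed.

Lemma normc_real (a : R) : normc a%:C = `|a|.
Proof. by rewrite /= expr0n addr0 sqrtr_sqr. Qed.

Lemma normc_i : normc 'i%C = 1 :> R.
Proof. by rewrite /= expr0n expr1n add0r sqrtr1. Qed.

Lemma normc_nat n : normc n%:R = n%:R :> R.
Proof.
have -> : n%:R = (n%:R : R)%:C :> C by rewrite rmorph_nat.
by rewrite normc_real ger0_norm.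
Qed.

Lemma normcB (x y : C) : normc (x - y) <= normc x + normc y.
Proof. by rewrite -(normcN y); exact: le_normcD. Qed.

Lemma normc_distC (x y : C) : normc (x - y) = normc (y - x).
Proof. by rewrite -normcN opprB. Qed.

Lemma normc_ge_Re (z : C) : `|complex.Re z| <= normc z.
Proof. by case: z => a b /=; rewrite -sqrtr_sqr ler_wsqrtr // lerDl sqr_ge0. Qed.

Lemma normc_ge_Im (z : C) : `|complex.Im z| <= normc z.
Proof. by case: z => a b /=; rewrite -sqrtr_sqr ler_wsqrtr // lerDr sqr_ge0. Qed.

Lemma normc_le_ReIm (z : C) : normc z <= `|complex.Re z| + `|complex.Im z|.
Proof.
rewrite {1}[z]complexE; apply: le_trans (le_normcD _ _) _.
by rewrite normcM normc_i mul1r !normc_real.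
Qed.

Lemma half_geometric (c : R) k : c / 2 ^+ k / 2 = c / 2 ^+ k.+1.
Proof. by rewrite exprSr invfM mulrA. Qed.

Lemma le0_geometric (x c : R) : (forall k, x <= c / 2 ^+ k) -> x <= 0.
Proof.
move=> x_le; rewrite leNgt; apply/negP => x_gt0.
have c_gt0 : 0 < c by apply: lt_le_trans x_gt0 _; have := x_le 0%N; rewrite expr0 divr1.
have [n c_lt] : exists n, c / x < n%:R.
  by exists (Num.Def.archi_bound (c / x)); apply: archi_boundP; rewrite divr_ge0 ?ltW.
have n_le : n%:R <= 2 ^+ n :> R by rewrite -natrX ler_nat ltnW // ltn_expl.
have := x_le n; rewrite ler_pdivlMr ?exprn_gt0 //.
move: c_lt; rewrite ltr_pdivrMr // => c_lt.
have : 0 <= x * (2 ^+ n - n%:R) by rewrite mulr_ge0 ?subr_ge0 // ltW.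
lra.
Qed.

Lemma geometric_limitR (a : nat -> R) (c : R) :
  (forall k, `|a k.+1 - a k| <= c / 2 ^+ k) ->
  exists l, forall k, `|a k - l| <= 2 * c / 2 ^+ k.
Proof.
move=> da.
have twice k : 2 * c / 2 ^+ k.+1 = c / 2 ^+ k.
  by rewrite -half_geometric mulrC !mulrA mulVf ?mul1r // pnatr_eq0.
pose u k := a k - 2 * c / 2 ^+ k.
pose w k := a k + 2 * c / 2 ^+ k.
have uS k : u k <= u k.+1.
  by have := da k; rewrite ler_norml /u twice => /andP[]; lra.
have wS k : w k.+1 <= w k.
  by have := da k; rewrite ler_norml /w twice => /andP[]; lra.
have u_le_w k m : u k <= w m.
  have c_ge0 : 0 <= c by have := da 0%N; rewrite expr0 divr1; exact: le_trans.
  have u_le : {homo u : i j / (i <= j)%N >-> i <= j}.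
    by apply: homo_leq; [exact: lexx | exact: le_trans | exact: uS].
  have w_ge : {homo w : i j / (i <= j)%N >-> j <= i}.
    apply: (homo_leq (r := fun x y => y <= x)); [exact: lexx | | exact: wS].
    by move=> y x z xy yz; exact: le_trans yz xy.
  apply: le_trans (u_le _ _ (leq_maxl k m)) _; apply: le_trans (w_ge _ _ (leq_maxr k m)).
  have : 0 <= 2 * c / 2 ^+ maxn k m by rewrite divr_ge0 ?exprn_ge0 ?mulr_ge0.
  rewrite /u /w; lra.
pose E : set R := fun x => exists k, x = u k.
exists (sup E) => k.
have u_le_sup : u k <= sup E.
  by apply: ub_le_sup; [exists (w 0%N) => _ [m ->] | exists k].
have sup_le_w : sup E <= w k.
  by apply: ge_sup; [exists (u 0%N), 0%N | move=> _ [m ->]].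
by rewrite ler_norml; move: u_le_sup sup_le_w; rewrite /u /w => ? ?; apply/andP; split; lra.
Qed.

Lemma geometric_limitC (z : nat -> C) (c : R) :
  (forall k, normc (z k.+1 - z k) <= c / 2 ^+ k) ->
  exists l, forall k, normc (z k - l) <= 4 * c / 2 ^+ k.
Proof.
move=> dz.
have [lr lim_Re] : exists lr, forall k, `|complex.Re (z k) - lr| <= 2 * c / 2 ^+ k.
  by apply: geometric_limitR => k; rewrite -raddfB; exact: le_trans (normc_ge_Re _) (dz k).
have [li lim_Im] : exists li, forall k, `|complex.Im (z k) - li| <= 2 * c / 2 ^+ k.
  by apply: geometric_limitR => k; rewrite -raddfB; exact: le_trans (normc_ge_Im _) (dz k).
exists (lr +i* li) => k; apply: le_trans (normc_le_ReIm _) _.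
rewrite !raddfB /=; have := lim_Re k; have := lim_Im k; lra.
Qed.

Section ContractionOnBalls.
Variable N : nat.
Implicit Types (x y : cvec R N) (r d : R).

Definition inball r x := forall j, normc (x j) <= r.
Definition close d x y := forall j, normc (x j - y j) <= d.

Lemma contraction_fixed_point (T : cvec R N -> cvec R N) (rho : R) (x0 : cvec R N) :
  0 <= rho -> inball rho x0 ->
  (forall x, inball rho x -> inball rho (T x)) ->
  (forall x y d, 0 <= d -> inball rho x -> inball rho y -> close d x y ->
     close (d / 2) (T x) (T y)) ->
  exists x, T x =1 x.
Proof.
move=> rho_ge0 x0_in T_in T_half.
pose X k := iter k T x0.
have X_in k : inball rho (X k) by elim: k => //= k; exact: T_in.
have geo_ge0 (c : R) k : 0 <= c -> 0 <= c / 2 ^+ k by move=> ?; rewrite divr_ge0 ?exprn_ge0.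
have X_step k : close (2 * rho / 2 ^+ k) (X k.+1) (X k).
  elim: k => [|k IH].
    move=> j; rewrite expr0 divr1; apply: le_trans (normcB _ _) _.
    by have := X_in 1%N j; have := X_in 0%N j; lra.
  rewrite -half_geometric; apply: T_half IH => //; exact/geo_ge0/mulr_ge0.
have /fin_all_exists[y X_lim] : forall j, exists l, forall k, normc (X k j - l) <= 8 * rho / 2 ^+ k.
  move=> j; have [l l_lim] := geometric_limitC (fun k => X_step k j).
  by exists l => k; have := l_lim k; rewrite mulrA -natrM.
have y_in : inball rho y.
  move=> j; rewrite -subr_le0; apply: (@le0_geometric _ (8 * rho)) => k.
  have := le_normcD (X k j) (y j - X k j); rewrite addrC subrK normc_distC.
  by have := X_in k j; have := X_lim j k; lra.
exists y => j; apply/eqP; rewrite -subr_eq0; apply/eqP/eq0_normc/le_anti; rewrite normc_ge0 andbT.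
apply: (@le0_geometric _ (8 * rho)) => k.
have y_close : close (8 * rho / 2 ^+ k) y (X k) by move=> i; rewrite normc_distC.
have := T_half _ _ _ (geo_ge0 _ k (mulr_ge0 (ler0n _ 8) rho_ge0)) y_in (X_in k) y_close j.
have := X_lim j k.+1; rewrite -half_geometric.
have -> : T y j - y j = (T y j - T (X k) j) + (X k.+1 j - y j) by rewrite addrA subrK.
have := le_normcD (T y j - T (X k) j) (X k.+1 j - y j); lra.
Qed.

End ContractionOnBalls.

(* F_j with g, gm, gp the midpoints at sites j, j-1, j+1, and the on-site
   modulus |.|^2 averaged over p and q: p = q = g for Midpt, while
   p = b_{j,n} and q = b_{j,n+1} for Mass. *)
Definition toy_rhs (p q g gm gp : C) : C :=
  - 'i%C / 2 * (p * p^*%C * g) - 'i%C / 2 * (q * q^*%C * g) + 2 * 'i%C * (g^*%C * (gm ^+ 2 + gp ^+ 2)).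

Definition current (u v : C) : C := 2 * 'i%C * (((v^*%C * u) ^+ 2)^*%C - (v^*%C * u) ^+ 2).

Lemma conjc_i : 'i%C^*%C = - 'i%C :> C.
Proof. by simpc. Qed.

(* Rewriting with [rmorphD] etc. leaves conjugates in a generic morphism form
   that [field] does not identify with [conjc]; these restatements avoid it. *)
Lemma conjcD (x y : C) : (x + y)^*%C = x^*%C + y^*%C. Proof. exact: rmorphD. Qed.
Lemma conjcN (x : C) : (- x)^*%C = - x^*%C. Proof. exact: rmorphN. Qed.
Lemma conjcM (x y : C) : (x * y)^*%C = x^*%C * y^*%C. Proof. exact: rmorphM. Qed.
Lemma conjcX (x : C) n : (x ^+ n)^*%C = x^*%C ^+ n. Proof. exact: rmorphXn. Qed.

Lemma toy_rhs0 : toy_rhs 0 0 0 0 0 = 0.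
Proof. by rewrite /toy_rhs !(mulr0, mul0r, expr0n, addr0, subr0). Qed.

Lemma toy_rhs_balance p q g gm gp :
  g^*%C * toy_rhs p q g gm gp + g * (toy_rhs p q g gm gp)^*%C = current g gp - current gm g.
Proof.
rewrite /toy_rhs /current.
rewrite !(conjcD, conjcN, conjcM, conjcX, conjc_inv, conjc_nat, conjcK, conjc_i).
by field.
Qed.

Definition bclose (r d : R) (u v : C) :=
  [/\ normc u <= r, normc v <= r & normc (u - v) <= d].

Lemma bclose_conj r d u v : bclose r d u v -> bclose r d u^*%C v^*%C.
Proof. by case=> ? ? ?; split; rewrite -?rmorphB normc_conj. Qed.

Lemma bclose_mul3 r d u1 u2 u3 v1 v2 v3 :
  bclose r d u1 v1 -> bclose r d u2 v2 -> bclose r d u3 v3 ->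
  normc (u1 * u2 * u3 - v1 * v2 * v3) <= 3 * (r ^+ 2 * d).
Proof.
move=> [u1r v1r d1] [u2r v2r d2] [u3r v3r d3].
have le_mul3 (a1 a2 a3 c1 c2 c3 : R) : 0 <= a1 -> 0 <= a2 -> 0 <= a3 ->
    a1 <= c1 -> a2 <= c2 -> a3 <= c3 -> a1 * a2 * a3 <= c1 * c2 * c3.
  by move=> *; rewrite ler_pM ?mulr_ge0 // ler_pM.
have -> : u1 * u2 * u3 - v1 * v2 * v3 =
    (u1 - v1) * u2 * u3 + v1 * (u2 - v2) * u3 + v1 * v2 * (u3 - v3) by ring.
apply: le_trans (le_normcD _ _) _; apply: le_trans (lerD (le_normcD _ _) (lexx _)) _.
rewrite !normcM.
have := le_mul3 _ _ _ _ _ _ (normc_ge0 _) (normc_ge0 _) (normc_ge0 _) d1 u2r u3r.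
have := le_mul3 _ _ _ _ _ _ (normc_ge0 _) (normc_ge0 _) (normc_ge0 _) v1r d2 u3r.
have := le_mul3 _ _ _ _ _ _ (normc_ge0 _) (normc_ge0 _) (normc_ge0 _) v1r v2r d3.
lra.
Qed.

Lemma toy_rhs_lipschitz r d p q g gm gp p' q' g' gm' gp' :
  bclose r d p p' -> bclose r d q q' -> bclose r d g g' ->
  bclose r d gm gm' -> bclose r d gp gp' ->
  normc (toy_rhs p q g gm gp - toy_rhs p' q' g' gm' gp') <= 15 * (r ^+ 2 * d).
Proof.
move=> pp qq gg gmm gpp.
have gg' := bclose_conj gg; have pp' := bclose_conj pp; have qq' := bclose_conj qq.
have := bclose_mul3 pp pp' gg; have := bclose_mul3 qq qq' gg.
have := bclose_mul3 gg' gmm gmm; have := bclose_mul3 gg' gpp gpp.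
move=> e4 e3 e2 e1.
have -> : toy_rhs p q g gm gp - toy_rhs p' q' g' gm' gp' =
    - 'i%C / 2 * (p * p^*%C * g - p' * p'^*%C * g')
    + - 'i%C / 2 * (q * q^*%C * g - q' * q'^*%C * g')
    + 2 * 'i%C * (g^*%C * gm * gm - g'^*%C * gm' * gm')
    + 2 * 'i%C * (g^*%C * gp * gp - g'^*%C * gp' * gp') by rewrite /toy_rhs; ring.
have normc_c1 : normc (- 'i%C / 2) = 2^-1 :> R.
  by rewrite normcM normcN normc_i normcV normc_nat mul1r.
have normc_c2 : normc (2 * 'i%C) = 2 :> R by rewrite normcM normc_i normc_nat mulr1.
apply: le_trans (le_normcD _ _) _; apply: le_trans (lerD (le_normcD _ _) (lexx _)) _.
apply: le_trans (lerD (lerD (le_normcD _ _) (lexx _)) (lexx _)) _.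
rewrite !(normcM (- 'i%C / 2)) !(normcM (2 * 'i%C)) normc_c1 normc_c2; lra.
Qed.

Section Schemes.
Variable N : nat.
Implicit Types (r d : R) (b x : cvec R N) (s : scheme).

Lemma comp_cases (k : nat) : (forall b, comp b k = 0) \/ exists i, forall b, comp b k = b i.
Proof.
rewrite /comp; case: k => [|k] /=; first by left.
by case: insubP => [i _ _|_]; [right; exists i | left].
Qed.

Lemma comp_ord b (i : 'I_N) : comp b i.+1 = b i.
Proof.
rewrite /comp /=; case: insubP => [i' _ /= i'E|]; last by rewrite ltn_ord.
by congr b; apply: val_inj.
Qed.

Lemma comp_boundary b : comp b 0 = 0 /\ comp b N.+1 = 0.
Proof. by split; rewrite /comp //=; case: insubP => [i|//]; rewrite ltnn. Qed.

Definition midpt b x k : C := (comp b k + comp x k) / 2.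

Definition site_old s b x j := if s is Midpt then midpt b x j else comp b j.
Definition site_new s b x j := if s is Midpt then midpt b x j else comp x j.

Lemma Fj_toy_rhs s b x j :
  Fj s b x j = toy_rhs (site_old s b x j) (site_new s b x j)
                       (midpt b x j) (midpt b x j.-1) (midpt b x j.+1).
Proof.
by case: s; rewrite /Fj /toy_rhs /= /midpt !sqr_normc; field.
Qed.

Lemma bclose_comp r d b b' k : 0 <= r -> 0 <= d ->
  (forall i, bclose r d (b i) (b' i)) -> bclose r d (comp b k) (comp b' k).
Proof.
move=> r_ge0 d_ge0 bb; case: (comp_cases k) => [c0 | [i ci]]; rewrite ?c0 ?ci //.
by rewrite /bclose subrr normc0.
Qed.

Lemma bclose_midpt r d b x b' x' k : 0 <= r -> 0 <= d ->
  (forall i, bclose r d (b i) (b' i)) -> (forall i, bclose r d (x i) (x' i)) ->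
  bclose r d (midpt b x k) (midpt b' x' k).
Proof.
move=> r_ge0 d_ge0 bb xx.
have [b_le b'_le db] := bclose_comp k r_ge0 d_ge0 bb.
have [x_le x'_le dx] := bclose_comp k r_ge0 d_ge0 xx.
have normc_half (z : C) : normc (z / 2) = normc z / 2 by rewrite normcM normcV normc_nat.
rewrite /bclose /midpt -mulrBl !normc_half.
have -> : comp b k + comp x k - (comp b' k + comp x' k) =
          (comp b k - comp b' k) + (comp x k - comp x' k) by ring.
have := le_normcD (comp b k) (comp x k); have := le_normcD (comp b' k) (comp x' k).
have := le_normcD (comp b k - comp b' k) (comp x k - comp x' k).
by split; lra.
Qed.

Lemma F_lipschitz s r d b x b' x' : 0 <= r -> 0 <= d ->
  (forall i, bclose r d (b i) (b' i)) -> (forall i, bclose r d (x i) (x' i)) ->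
  close (15 * (r ^+ 2 * d)) (F s b x) (F s b' x').
Proof.
move=> r_ge0 d_ge0 bb xx j; rewrite /F !Fj_toy_rhs.
have mid k := bclose_midpt k r_ge0 d_ge0 bb xx.
apply: toy_rhs_lipschitz; try exact: mid.
all: by case: s => /=; [exact: mid | exact: bclose_comp].
Qed.

Lemma F_bounded s r b x : 0 <= r -> inball r b -> inball r x ->
  inball (15 * r ^+ 3) (F s b x).
Proof.
move=> r_ge0 b_le x_le j.
have zero_le (z : C) : normc z <= r -> bclose r r z 0.
  by move=> z_le; rewrite /bclose subr0 normc0.
have := F_lipschitz s r_ge0 r_ge0 (fun i => zero_le _ (b_le i)) (fun i => zero_le _ (x_le i)) j.
have -> : F s (fun=> 0 : C) (fun=> 0 : C) j = 0.
  have comp0 k : comp (fun _ : 'I_N => 0 : C) k = 0 by case: (comp_cases k) => [-> | [i ->]].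
  by rewrite /F Fj_toy_rhs; case: s; rewrite /= /midpt !comp0 addr0 mul0r toy_rhs0.
by rewrite subr0 -exprSr mulrA.
Qed.

Definition mass b : R := \sum_j normc (b j) ^+ 2.

Lemma current0l v : current 0 v = 0.
Proof. by rewrite /current mulr0 expr0n conjc0 subrr mulr0. Qed.

Lemma current0r u : current u 0 = 0.
Proof. by rewrite /current conjc0 mul0r expr0n conjc0 subrr mulr0. Qed.

Lemma step_mass s dt b x : step s dt b x -> mass x = mass b.
Proof.
move=> stepx; apply: complexI; rewrite /mass !rmorph_sum /=.
have sq (z : C) : (normc z ^+ 2)%:C = z * z^*%C by rewrite -sqr_normc normr_normc rmorphXn.
under eq_bigr => j _ do rewrite sq.
under [RHS]eq_bigr => j _ do rewrite sq.
apply/eqP; rewrite -subr_eq0 -sumrB; apply/eqP.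
pose g k := midpt b x k.
pose J k := current (g k) (g k.+1).
have site j : x j * (x j)^*%C - b j * (b j)^*%C = dt%:C * (J j.+1 - J j).
  have gj : g j.+1 = (b j + x j) / 2 by rewrite /g /midpt !comp_ord.
  have dx : x j - b j = dt%:C * F s b x j by rewrite {1}(stepx j) addrAC subrr add0r.
  have -> : x j * (x j)^*%C - b j * (b j)^*%C =
      (g j.+1)^*%C * (x j - b j) + g j.+1 * (x j - b j)^*%C.
    by rewrite gj !(conjcD, conjcN, conjcM, conjc_inv, conjc_nat); field.
  rewrite dx (conjcM dt%:C) conjc_real.
  change (F s b x j) with (Fj s b x j.+1); rewrite Fj_toy_rhs -/(g j.+1) -/(g j) -/(g j.+2).
  set T := toy_rhs _ _ _ _ _.
  have -> : (g j.+1)^*%C * (dt%:C * T) + g j.+1 * (dt%:C * T^*%C) =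
      dt%:C * ((g j.+1)^*%C * T + g j.+1 * T^*%C) by ring.
  by rewrite toy_rhs_balance.
rewrite (eq_bigr _ (fun j _ => site j)) -mulr_sumr.
rewrite -(big_mkord xpredT (fun j => J j.+1 - J j)) telescope_sumr //.
have [b0 bN] := comp_boundary b; have [x0 xN] := comp_boundary x.
by rewrite /J /g /midpt b0 x0 bN xN addr0 mul0r current0l current0r subrr mulr0.
Qed.

Lemma inball_mass b : inball (1 + mass b) b.
Proof.
move=> j; have le_mass : normc (b j) ^+ 2 <= mass b.
  by rewrite /mass (bigD1 j) //= lerDl sumr_ge0 // => i _; exact: sqr_ge0.
by have := normc_ge0 (b j); nra.
Qed.

Lemma step_solvable s (dt : R) r b : 0 <= r -> inball r b -> 0 < dt ->
  dt * (120 * r ^+ 2) <= 1 -> exists x, step s dt b x.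
Proof.
move=> r_ge0 b_le dt_gt0 dt_le.
pose T x : cvec R N := fun j => b j + dt%:C * F s b x j.
have normc_dt : normc dt%:C = dt by rewrite normc_real gtr0_norm.
have two_r_ge0 : 0 <= 2 * r by rewrite mulr_ge0.
have dt_r3 : dt * (120 * r ^+ 3) <= r.
  by have := ler_wpM2r r_ge0 dt_le; rewrite exprSr; lra.
have [x Tx] : exists x, T x =1 x.
  apply: (@contraction_fixed_point _ T (2 * r) b) => //.
  - by move=> j; have := b_le j; lra.
  - move=> x x_le j; apply: le_trans (le_normcD _ _) _.
    rewrite normcM normc_dt.
    have b_le2 : inball (2 * r) b by move=> i; have := b_le i; lra.
    have := ler_wpM2l (ltW dt_gt0) (F_bounded s two_r_ge0 b_le2 x_le j).
    by have := b_le j; lra.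
  - move=> x y d d_ge0 x_le y_le xy j.
    have bb i : bclose (2 * r) d (b i) (b i).
      by rewrite /bclose subrr normc0; have := b_le i; split => //; lra.
    have := F_lipschitz s two_r_ge0 d_ge0 bb (fun i => And3 (x_le i) (y_le i) (xy i)) j.
    have -> : T x j - T y j = dt%:C * (F s b x j - F s b y j) by rewrite /T; ring.
    rewrite normcM normc_dt => /(ler_wpM2l (ltW dt_gt0)).
    by have := ler_wpM2r d_ge0 dt_le; lra.
by exists x => j; rewrite -[LHS]Tx.
Qed.

End Schemes.

End MassPreservingSchemes.

Unset Implicit Arguments.

Theorem corollary3p2 (R : realType) (s : scheme) (N : nat) (hN : (1 <= N)%N)
    (b0 : cvec R N) :
  exists dt1 : R, 0 < dt1 /\
    forall dt : R, 0 < dt -> dt <= dt1 ->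
      forall (n : nat) (b : nat -> cvec R N),
        b 0%N = b0 ->
        (forall k : nat, (k < n)%N -> step s dt (b k) (b k.+1)) ->
        exists bn1 : cvec R N, step s dt (b n) bn1.
Proof.
(* The argument works for every N. *)
pose r := 1 + mass b0.
have r_gt0 : 0 < r by rewrite ltr_pwDl // sumr_ge0 // => j _; exact: sqr_ge0.
have bound_gt0 : 0 < 120 * r ^+ 2 by rewrite mulr_gt0 ?exprn_gt0.
exists (120 * r ^+ 2)^-1; split => [|dt dt_gt0 dt_le n b b_0 b_step].
  by rewrite invr_gt0.
have b_mass k : (k <= n)%N -> mass (b k) = mass b0.
  elim: k => [|k IHk] k_le; first by rewrite b_0.
  by rewrite (step_mass (b_step k k_le)) IHk // ltnW.
have b_le : inball r (b n) by rewrite /r -(b_mass n (leqnn n)); exact: inball_mass.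
apply: (step_solvable s (ltW r_gt0) b_le dt_gt0).
by rewrite -ler_pdivlMr // mul1r.
Qed.
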